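(* Suppose $\xi\star\pi\in\perp\!\!\!\perp$. Then: (1) $\xi'\star\pi'\in\perp\!\!\!\perp$, where $\xi'\star\pi'$ is obtained from $\xi\star\pi$ by substituting arbitrary terms for the non-efficient occurrences of $p$; (2) if $\xi'\star\pi'$ is obtained from $\xi\star\pi$ by substituting $q_0$ for the efficient occurrence of $p$ and arbitrary terms for the non-efficient occurrences of $p$, then $\xi'\star\pi'\notin\perp\!\!\!\perp$, and indeed $\xi'\star\pi'\succ q_0\star\varpi$ for some stack $\varpi$.
   Context: Fix an integer $N\ge 0$. The set $\Lambda$ of terms is the smallest set containing the constants $B,C,I,K,W,cc,A$ and $p,q_0,\dots,q_N$, closed under application $(\xi)\eta$ (written $\xi\eta$), and containing, for each sequence $(\xi_i)_{i\in\mathbb N}$ of closed terms (no occurrence of $p,q_0,\dots,q_N$), a constant $\bigwedge_i\xi_i$ (injectively, well-founded). Stacks: finite sequences $t_0\cdot\ldots\cdot t_{n-1}\cdot\pi_0$ of terms, $\pi_0$ the empty stack; $\Pi$ the set of stacks. $\ell_t=((C)(B)CB)t$, $k_{\pi_0}=A$, $k_{t\cdot\pi}=(\ell_t)k_\pi$; $\sigma=(BW)(C)(B)BB$, $\underline0=(K)I$, $\underline{n+1}=(\sigma)\underline n$. Execution $\succ$ is generated by the one-step rules: $(\xi)\eta\star\pi\succ\xi\star\eta\cdot\pi$; $B\star\xi\cdot\eta\cdot\zeta\cdot\pi\succ\xi\star(\eta)\zeta\cdot\pi$; $C\star\xi\cdot\eta\cdot\zeta\cdot\pi\succ\xi\star\zeta\cdot\eta\cdot\pi$;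 $I\star\xi\cdot\pi\succ\xi\star\pi$; $K\star\xi\cdot\eta\cdot\pi\succ\xi\star\pi$; $W\star\xi\cdot\eta\cdot\pi\succ\xi\star\eta\cdot\eta\cdot\pi$; $cc\star\xi\cdot\pi\succ\xi\star k_\pi\cdot\pi$; $A\star\xi\cdot\pi\succ\xi\star\pi_0$; $\bigwedge_i\xi_i\star\underline n\cdot\pi\succ\xi_n\star\pi$ (at most one rule applies to a given process). Pole $\perp\!\!\!\perp=\{\xi\star\pi:\exists\varpi,\ \xi\star\pi\succ p\star\varpi\}$. Efficient occurrence: for each process $\xi\star\pi\in\perp\!\!\!\perp$ one occurrence of $p$ in it is called efficient, defined by recursion on the length of the execution of $\xi\star\pi$ to a process of the form $p\star\varpi$: if $\xi=p$, it is this head occurrence; otherwise $\xi\star\pi$ reduces in one step by one of the rules above to a process $\xi_1\star\pi_1\in\perp\!\!\!\perp$, and the efficient occurrence of $\xi\star\pi$ is the occurrence of $p$ in $\xi\star\pi$ from which the efficient occurrence of $p$ in $\xi_1\star\pi_1$ originates under that rule (e.g. for the $cc$ rule, an occurrence lying in $k_\pi$ or in $\pi$ in $\xi\star k_\pi\cdot\pi$ corresponds to the matching occurrence in $\pi$ in $cc\star\xi\cdot\pi$). *)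

From Stdlib Require Import List Relations.
Import ListNotations.

(* Terms of Lambda.  [Tq i] is q_i (well-formedness requires i <= N);
   [Conj f] is the constant /\_i f i (well-formedness requires all f i closed). *)
Inductive term : Type :=
| TB | TC | TI | TK | TW | Tcc | TA
| Tp
| Tq (i : nat)
| App (t u : term)
| Conj (f : nat -> term).

Fixpoint closed (t : term) : Prop :=
  match t with
  | Tp => False
  | Tq _ => False
  | App x y => closed x /\ closed y
  | Conj f => forall n, closed (f n)
  | _ => True
  end.

Fixpoint wf (N : nat) (t : term) : Prop :=
  match t with
  | Tq i => i <= N
  | App x y => wf N x /\ wf N y
  | Conj f => forall n, closed (f n) /\ wf N (f n)
  | _ => True
  end.

Definition stack := list term.
Definition process := (term * stack)%type.

(* l_t = ((C)(B)CB) t,  i.e.  C (B C B) t *)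
Definition ellC : term := App TC (App (App TB TC) TB).
Definition ell (t : term) : term := App ellC t.

Fixpoint kst (pi : stack) : term :=
  match pi with
  | [] => TA
  | t :: r => App (ell t) (kst r)
  end.

(* sigma = (BW)(C)(B)BB = (B W) (C (B B B)) ; numerals *)
Definition sigma : term := App (App TB TW) (App TC (App (App TB TB) TB)).
Fixpoint numeral (n : nat) : term :=
  match n with
  | O => App TK TI
  | S m => App sigma (numeral m)
  end.

Inductive step1 : process -> process -> Prop :=
| s_app x y pi : step1 (App x y, pi) (x, y :: pi)
| s_B x y z pi : step1 (TB, x :: y :: z :: pi) (x, App y z :: pi)
| s_C x y z pi : step1 (TC, x :: y :: z :: pi) (x, z :: y :: pi)
| s_I x pi : step1 (TI, x :: pi) (x, pi)
| s_K x y pi : step1 (TK, x :: y :: pi) (x, pi)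
| s_W x y pi : step1 (TW, x :: y :: pi) (x, y :: y :: pi)
| s_cc x pi : step1 (Tcc, x :: pi) (x, kst pi :: pi)
| s_A x pi : step1 (TA, x :: pi) (x, [])
| s_conj f n pi : step1 (Conj f, numeral n :: pi) (f n, pi).

Definition red : process -> process -> Prop := clos_refl_trans process step1.

Definition pole (s : process) : Prop := exists w, red s (Tp, w).

(* Positions of subterms in a process: in the head term ([PH path]) or in
   the i-th element of the stack ([PS i path]); a path is a list of
   directions in the application tree (false = function part,
   true = argument part).  An occurrence of p is a position whose subterm
   is [Tp].  (Occurrences never lie inside a constant /\_i xi_i, since
   the xi_i are closed.) *)
Inductive pos : Type :=
| PH (l : list bool)
| PS (i : nat) (l : list bool).

Definition pos_eq_dec (a b : pos) : {a = b} + {a <> b}.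
Proof. decide equality; try apply list_eq_dec; try apply Bool.bool_dec;
       apply PeanoNat.Nat.eq_dec. Defined.

Fixpoint subterm (t : term) (l : list bool) : option term :=
  match l, t with
  | [], _ => Some t
  | false :: r, App x _ => subterm x r
  | true :: r, App _ y => subterm y r
  | _, _ => None
  end.

Definition at_pos (s : process) (o : pos) : option term :=
  match o with
  | PH l => subterm (fst s) l
  | PS i l => match nth_error (snd s) i with
              | Some t => subterm t l
              | None => None
              end
  end.

Definition is_occ_p (s : process) (o : pos) : Prop := at_pos s o = Some Tp.

(* origin of an occurrence in k_pi (at depth j) as an occurrence of the
   source stack x . pi of the cc rule *)
Fixpoint kback (l : list bool) (j : nat) : pos :=
  match l with
  | true :: r => kback r (S j)
  | false :: true :: r => PS (S j) r
  | _ => PS 0 l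
  end.

(* [back xi o]: for a process with head xi that makes one step, the
   occurrence of the source process from which the occurrence [o] of the
   resulting process originates under the applied rule.  (Values in
   impossible cases are irrelevant.) *)
Definition back (xi : term) (o : pos) : pos :=
  match xi, o with
  | App _ _, PH l => PH (false :: l)
  | App _ _, PS 0 l => PH (true :: l)
  | App _ _, PS (S i) l => PS i l
  | TB, PH l => PS 0 l
  | TB, PS 0 (false :: l) => PS 1 l
  | TB, PS 0 (true :: l) => PS 2 l
  | TB, PS 0 [] => PS 0 []
  | TB, PS (S i) l => PS (S (S (S i))) l
  | TC, PH l => PS 0 l
  | TC, PS 0 l => PS 2 l
  | TC, PS 1 l => PS 1 l
  | TC, PS (S (S i)) l => PS (S (S (S i))) l
  | TI, PH l => PS 0 l
  | TI, PS i l => PS (S i) l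
  | TK, PH l => PS 0 l
  | TK, PS i l => PS (S (S i)) l
  | TW, PH l => PS 0 l
  | TW, PS 0 l => PS 1 l
  | TW, PS 1 l => PS 1 l
  | TW, PS (S (S i)) l => PS (S (S i)) l
  | Tcc, PH l => PS 0 l
  | Tcc, PS 0 l => kback l 0
  | Tcc, PS (S i) l => PS (S i) l
  | TA, PH l => PS 0 l
  | Conj _, PS i l => PS (S i) l
  | _, _ => o
  end.

(* [eff s o]: o is the efficient occurrence of p in s (s in the pole),
   defined by recursion on the length of the execution to p * varpi. *)
Inductive eff : process -> pos -> Prop :=
| eff_head w : eff (Tp, w) (PH [])
| eff_step xi pi s' o :
    step1 (xi, pi) s' -> eff s' o -> eff (xi, pi) (back xi o).

Fixpoint sbt (h : list bool -> term) (t : term) : term :=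
  match t with
  | Tp => h []
  | App x y => App (sbt (fun l => h (false :: l)) x) (sbt (fun l => h (true :: l)) y)
  | _ => t
  end.

Fixpoint sbs (h : nat -> list bool -> term) (pi : stack) : stack :=
  match pi with
  | [] => []
  | t :: r => sbt (h 0) t :: sbs (fun i => h (S i)) r
  end.

Definition subst_proc (h : pos -> term) (s : process) : process :=
  (sbt (fun l => h (PH l)) (fst s), sbs (fun i l => h (PS i l)) (snd s)).

From Stdlib Require Import List Relations.
Import ListNotations.

(* Substitution commutes with execution: if [s] steps to [s'], then [s]
   with [p]-occurrences replaced by [h] steps to [s'] with occurrences
   replaced by [h] pulled back along [back].  Following the execution of a
   process of the pole to [p * varpi] therefore carries the term put at the
   efficient occurrence to head position, whatever is put elsewhere.  Putting
   [q_0] there reaches [q_0 * varpi], which is stuck; since execution is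
   deterministic, [p * varpi'] is then unreachable. *)

Lemma sbt_ext t : forall h1 h2, (forall l, h1 l = h2 l) -> sbt h1 t = sbt h2 t.
Proof. induction t; simpl; intros; f_equal; auto. Qed.

Lemma sbs_ext pi :
  forall h1 h2, (forall i l, h1 i l = h2 i l) -> sbs h1 pi = sbs h2 pi.
Proof.
  induction pi; simpl; intros; f_equal; auto using sbt_ext.
Qed.

Lemma sbt_closed t h : closed t -> sbt h t = t.
Proof.
  revert h; induction t; simpl; intros h Hc; try tauto.
  destruct Hc; rewrite IHt1, IHt2; auto.
Qed.

Lemma numeral_closed n : closed (numeral n).
Proof. induction n; simpl; tauto. Qed.

Lemma sbt_kst pi : forall j h,
  sbt (fun l => h (kback l j)) (kst pi)
  = kst (sbs (fun i l => h (PS (S (j + i)) l)) pi).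
Proof.
  induction pi as [|t pi IH]; intros j h; simpl; auto.
  f_equal.
  - unfold ell, ellC; f_equal. apply sbt_ext; intro l.
    rewrite PeanoNat.Nat.add_0_r; reflexivity.
  - rewrite IH. f_equal. apply sbs_ext; intros i l.
    rewrite PeanoNat.Nat.add_succ_r; reflexivity.
Qed.

(* Substitution never enters a constant [Conj f]; the [Conj] rule can be
   simulated because the [f n] are closed, and this is the invariant that
   execution must preserve. *)
Fixpoint conj_closed (t : term) : Prop :=
  match t with
  | App x y => conj_closed x /\ conj_closed y
  | Conj f => forall n, closed (f n)
  | _ => True
  end.

Definition proc_conj_closed (s : process) : Prop :=
  conj_closed (fst s) /\ Forall conj_closed (snd s).

Lemma wf_conj_closed N t : wf N t -> conj_closed t.
Proof. induction t; simpl; firstorder. Qed.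

Lemma closed_conj_closed t : closed t -> conj_closed t.
Proof. induction t; simpl; firstorder. Qed.

Lemma kst_conj_closed pi : Forall conj_closed pi -> conj_closed (kst pi).
Proof. induction 1; simpl; repeat split; auto. Qed.

Lemma step1_conj_closed s s' :
  step1 s s' -> proc_conj_closed s -> proc_conj_closed s'.
Proof.
  unfold proc_conj_closed; destruct 1; simpl; intros [Hxi Hpi];
  repeat match goal with H : Forall _ (_ :: _) |- _ => inversion H; subst; clear H end;
  simpl in *;
  repeat match goal with H : _ /\ _ |- _ => destruct H end;
  split; repeat constructor; auto using kst_conj_closed, closed_conj_closed.
Qed.

Lemma step1_subst s s' : step1 s s' -> proc_conj_closed s -> forall h,
  step1 (subst_proc h s) (subst_proc (fun o => h (back (fst s) o)) s').
Proof.
  unfold proc_conj_closed, subst_proc; destruct 1; simpl; intros [Hxi _] h;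
    try constructor.
  - rewrite sbt_kst; constructor.
  - rewrite (sbt_closed (numeral n)) by apply numeral_closed.
    rewrite (sbt_closed (f n)) by apply Hxi.
    constructor.
Qed.

Lemma eff_subst_red s e : eff s e -> proc_conj_closed s ->
  forall h, exists w, red (subst_proc h s) (h e, w).
Proof.
  induction 1 as [w | xi pi s' o Hstep _ IH]; intros Hs h.
  - exists (sbs (fun i l => h (PS i l)) w); apply rt_refl.
  - destruct (IH (step1_conj_closed _ _ Hstep Hs) (fun o' => h (back xi o')))
      as [w Hw].
    exists w; eapply rt_trans; [apply rt_step, (step1_subst _ _ Hstep Hs) | exact Hw].
Qed.

Lemma eff_subst_at_red s e T F : eff s e -> proc_conj_closed s ->
  exists w, red (subst_proc (fun o => if pos_eq_dec o e then T else F o) s) (T, w).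
Proof.
  intros He Hs.
  destruct (eff_subst_red s e He Hs (fun o => if pos_eq_dec o e then T else F o))
    as [w Hw].
  exists w; destruct (pos_eq_dec e e); [exact Hw | congruence].
Qed.

Lemma numeral_inj n m : numeral n = numeral m -> n = m.
Proof.
  revert m; induction n; destruct m; simpl; intros H; try discriminate; auto.
  inversion H; auto.
Qed.

Lemma step1_det s a b : step1 s a -> step1 s b -> a = b.
Proof.
  destruct 1; intros Hb; inversion Hb; subst; auto.
  match goal with H : numeral _ = numeral _ |- _ => apply numeral_inj in H end.
  subst; auto.
Qed.

Definition stuck (s : process) : Prop := forall s', ~ step1 s s'.

Lemma red_stuck_unique s u v :
  red s u -> red s v -> stuck u -> stuck v -> u = v.
Proof.
  intros Hu; apply clos_rt_rt1n in Hu.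
  induction Hu as [s | s s1 u Hs1 _ IH]; intros Hv Su Sv;
    apply clos_rt_rt1n in Hv; destruct Hv as [| s2 v Hs2 Hv].
  - reflexivity.
  - exfalso; exact (Su _ Hs2).
  - exfalso; exact (Sv _ Hs1).
  - rewrite (step1_det _ _ _ Hs1 Hs2) in IH.
    apply IH; auto; apply clos_rt1n_rt; exact Hv.
Qed.

Lemma head_stuck x w : x = Tp \/ x = Tq 0 -> stuck (x, w).
Proof. intros [-> | ->] s' H; inversion H. Qed.

(* The well-formedness hypotheses are needed only for [conj_closed]; the
   substituted terms [F o] are arbitrary. *)
Theorem lemma4 (N : nat) (xi : term) (pi : stack) (e : pos) (F : pos -> term) :
  wf N xi -> Forall (wf N) pi -> (forall o, wf N (F o)) ->
  pole (xi, pi) -> eff (xi, pi) e ->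
  pole (subst_proc (fun o => if pos_eq_dec o e then Tp else F o) (xi, pi))
  /\ (exists w, red (subst_proc (fun o => if pos_eq_dec o e then Tq 0 else F o) (xi, pi))
                    (Tq 0, w))
  /\ ~ pole (subst_proc (fun o => if pos_eq_dec o e then Tq 0 else F o) (xi, pi)).
Proof.
  intros Hxi Hpi _ _ He.
  assert (Hs : proc_conj_closed (xi, pi)).
  { split; [eapply wf_conj_closed; eauto|].
    eapply Forall_impl; [|exact Hpi]; intros; eapply wf_conj_closed; eauto. }
  destruct (eff_subst_at_red _ _ (Tq 0) F He Hs) as [w Hq].
  split; [|split].
  - exact (eff_subst_at_red _ _ Tp F He Hs).
  - exists w; exact Hq.
  - intros [w' Hp].
    assert (Heq : (Tq 0, w) = (Tp, w'))
      by (apply (red_stuck_unique _ _ _ Hq Hp); apply head_stuck; auto).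
    discriminate Heq.
Qed.
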